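(* Let $A\in\mathbb{R}^{n\times n}$ be nonsingular, $B\in\mathbb{R}^{n\times p}$, $C\in\mathbb{R}^{q\times n}$, and let $X_0=O$. For $k=0,1,2,\dots$ suppose that $A-X_kBB^T$ is nonsingular and that $X_{k+1}$ is the approximate solution computed by EKSM (in the sense described in the context) of the Newton–Kleinman Lyapunov equation $$(A-X_kBB^T)X+X(A-X_kBB^T)^T=-X_kBB^TX_k-C^TC ,$$ i.e. $X_{k+1}=W_{k+1}Y^{(k+1)}W_{k+1}^T$, where the columns of $W_{k+1}$ form an orthonormal basis of $\mathbf{EK}^\square_{m_{k+1}}(A-X_kBB^T,[C^T,X_kB])$ for some $m_{k+1}\ge1$, and $Y^{(k+1)}$ is a square matrix; write $X_{k+1}=S_{k+1}S_{k+1}^T$ when $Y^{(k+1)}$ is symmetric positive semidefinite. Then for every $k\ge0$, $$\mathrm{Range}(X_{k+1})\subseteq \mathbf{EK}^\square_{\bar m_{k+1}}(A,C^T)\quad(\text{equivalently }\mathrm{Range}(S_{k+1})\subseteq \mathbf{EK}^\square_{\bar m_{k+1}}(A,C^T))$$ for some integer $\bar m_{k+1}$ with $\bar m_{k+1}\le \sum_{j=1}^{k+1}m_j+2$.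
   Context: For a nonsingular $M\in\mathbb{R}^{n\times n}$ and $G\in\mathbb{R}^{n\times s}$, the block extended Krylov subspace is $\mathbf{EK}^\square_m(M,G)=\mathrm{Range}([G,M^{-1}G,MG,M^{-2}G,\dots,M^{m-1}G,M^{-m}G])$. ''Solving the Lyapunov equation $MX+XM^T+GG^T=0$ by EKSM'' means computing an approximate solution of the form $VYV^T$, where the columns of $V$ form an orthonormal basis of $\mathbf{EK}^\square_m(M,G)$ for some $m$ and $Y$ is a small square matrix (e.g. obtained by a Galerkin condition). *)

(* Subspaces of R^n are represented, as in mxalgebra, by
   row spaces; the column space (Range) of X : 'M_(n,k) is the row space of X^T. *)
From HB Require Import structures.
From mathcomp Require Import all_boot all_order all_algebra.
Set Implicit Arguments. Unset Strict Implicit. Unset Printing Implicit Defensive.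
Import Order.TTheory GRing.Theory Num.Theory.
Local Open Scope ring_scope.

Definition Range (R : fieldType) (n k : nat) (X : 'M[R]_(n, k)) : 'M[R]_(k, n) := X^T.

Definition EK (R : fieldType) (n s : nat) (m : nat) (M : 'M[R]_n) (G : 'M[R]_(n, s))
  : 'M[R]_n :=
  (\sum_(i < m) (<< Range (M ^+ i *m G) >> + << Range (invmx M ^+ i.+1 *m G) >>))%MS.

Definition orthonormal_basis (R : fieldType) (n r : nat) (W : 'M[R]_(n, r)) (S : 'M[R]_n)
  : Prop :=
  W^T *m W = 1%:M /\ (Range W == S)%MS.

From HB Require Import structures.
From mathcomp Require Import all_boot all_order all_algebra.
Import GRing.Theory Num.Theory.
Local Open Scope ring_scope.

(* Let K_k = A - X_k B B^T and G_k = [C^T, X_k B].  The proof rests on one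
   invariant: Range(X_k) lies in EK_(s_k + 1)(A, C^T), s_k = m_0 + ... + m_(k-1).
   If it holds for X_k then every Krylov vector of EK_(m_k)(K_k, G_k) lies in
   EK_(m_k + s_k + 1)(A, C^T): the generators do (C^T lies in the first block,
   X_k B in Range(X_k)), and one multiplication by K_k or by
   K_k^{-1} = A^{-1} + A^{-1} (X_k B B^T) K_k^{-1} only enlarges the index of
   the extended Krylov space of A by one, because the correction terms have
   range inside Range(X_k).  Since X_(k+1) = W_k Y_k W_k^T has range inside
   Range(W_k) = EK_(m_k)(K_k, G_k), the invariant propagates, which gives the
   theorem with mbar = s_(k+1) + 1.  Only Range(W_k) = EK_(m_k)(K_k, G_k) is
   used: neither orthonormality of W_k, the choice of Y_k, nor m_k >= 1.
   The file first collects facts about EK for an arbitrary matrix (membership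
   of the generators, monotonicity, one-step growth under A and A^{-1}), then
   a criterion bounding EK_m(N, G) by an increasing chain of subspaces, then
   the low-rank update lemma, and finally the theorem. *)

Section ExtendedKrylov.
Set Implicit Arguments. Unset Strict Implicit.
Variables (R : fieldType) (n : nat).
Implicit Types (N A E : 'M[R]_n).

Lemma EK_power_sub s m N (G : 'M[R]_(n, s)) i : (i < m)%N ->
  (Range (N ^+ i *m G) <= EK m N G)%MS.
Proof.
move=> lt_im; apply: (sumsmx_sup (Ordinal lt_im)) => //=.
by apply: submx_trans (addsmxSl _ _); rewrite genmxE.
Qed.

Lemma EK_inv_power_sub s m N (G : 'M[R]_(n, s)) i : (i < m)%N ->
  (Range (invmx N ^+ i.+1 *m G) <= EK m N G)%MS.
Proof.
move=> lt_im; apply: (sumsmx_sup (Ordinal lt_im)) => //=.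
by apply: submx_trans (addsmxSr _ _); rewrite genmxE.
Qed.

Lemma EK_mul_sub s m N (G : 'M[R]_(n, s)) (M S : 'M[R]_n) :
  (forall i, (i < m)%N -> (Range (N ^+ i *m G) *m M <= S)%MS) ->
  (forall i, (i < m)%N -> (Range (invmx N ^+ i.+1 *m G) *m M <= S)%MS) ->
  (EK m N G *m M <= S)%MS.
Proof.
move=> powS invS; rewrite /EK sumsmxMr; apply/sumsmx_subP => i _.
by rewrite addsmxMr addsmx_sub !(eqmxMr _ (genmxE _)) powS ?invS.
Qed.

Lemma chain_monotone (f : nat -> 'M[R]_n) : (forall j, (f j <= f j.+1)%MS) ->
  {homo f : i j / (i <= j)%N >-> (i <= j)%MS}.
Proof.
apply: (@homo_leq _ f (fun S T => (S <= T)%MS)) => [S|S1 S2 S3].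
  exact: submx_refl.
exact: submx_trans.
Qed.

Lemma EK_monotone s N (G : 'M[R]_(n, s)) m1 m2 : (m1 <= m2)%N ->
  (EK m1 N G <= EK m2 N G)%MS.
Proof.
by apply: (chain_monotone (f := fun m => EK m N G)) => m;
  rewrite /EK big_ord_recr /= addsmxSl.
Qed.

Lemma mulmx_exprS (N : 'M[R]_n) i : N *m N ^+ i = N ^+ i.+1.
Proof. by rewrite exprS. Qed.

Lemma mul_invmx_pow A i : A \in unitmx -> A *m invmx A ^+ i.+1 = invmx A ^+ i.
Proof. by move=> uA; rewrite -mulmx_exprS mulmxA mulmxV // mul1mx. Qed.

Lemma invmx_mul_pow A i : A \in unitmx -> invmx A *m A ^+ i.+1 = A ^+ i.
Proof. by move=> uA; rewrite -mulmx_exprS mulmxA mulVmx // mul1mx. Qed.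

Lemma RangeM s (M P : 'M[R]_n) (G : 'M[R]_(n, s)) :
  Range (P *m G) *m M^T = Range ((M *m P) *m G).
Proof. by rewrite /Range -trmx_mul mulmxA. Qed.

Lemma EK_mulA s m A (G : 'M[R]_(n, s)) : A \in unitmx ->
  (EK m A G *m A^T <= EK m.+1 A G)%MS.
Proof.
move=> uA; apply: EK_mul_sub => i lt_im; rewrite RangeM.
  by rewrite mulmx_exprS; apply: EK_power_sub.
rewrite mul_invmx_pow //; case: i lt_im => [|i] lt_im.
  by have := EK_power_sub A G (ltn0Sn m); rewrite !expr0.
by apply: EK_inv_power_sub; rewrite ltnS (ltnW (ltnW lt_im)).
Qed.

Lemma EK_mulinvA s m A (G : 'M[R]_(n, s)) : A \in unitmx ->
  (EK m A G *m (invmx A)^T <= EK m.+1 A G)%MS.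
Proof.
move=> uA; apply: EK_mul_sub => i lt_im; rewrite RangeM; last first.
  by rewrite mulmx_exprS; apply: EK_inv_power_sub.
case: i lt_im => [|i] lt_im.
  by have := EK_inv_power_sub A G (ltn0Sn m); rewrite expr0 mulmx1 expr1.
by rewrite invmx_mul_pow //; apply: EK_power_sub; rewrite ltnS (ltnW (ltnW lt_im)).
Qed.

Lemma Range_power_chain s N (G : 'M[R]_(n, s)) (f : nat -> 'M[R]_n) :
  (forall j, (f j *m N^T <= f j.+1)%MS) -> (Range G <= f 0%N)%MS ->
  forall i, (Range (N ^+ i *m G) <= f i)%MS.
Proof.
move=> stepN G0; elim=> [|i IHi]; first by rewrite expr0 mul1mx.
rewrite -mulmx_exprS -(mul1mx (_ ^+ i)) -RangeM mul1mx.
exact: submx_trans (submxMr _ IHi) (stepN i).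
Qed.

Lemma EK_chain_sub s N (G : 'M[R]_(n, s)) (f : nat -> 'M[R]_n) :
  (forall j, (f j <= f j.+1)%MS) ->
  (forall j, (f j *m N^T <= f j.+1)%MS) ->
  (forall j, (f j *m (invmx N)^T <= f j.+1)%MS) ->
  (Range G <= f 0%N)%MS -> forall m, (EK m N G <= f m)%MS.
Proof.
move=> incr stepN stepNV G0 m.
have f_mono := chain_monotone incr.
rewrite -[EK m N G]mulmx1; apply: EK_mul_sub => i lt_im; rewrite mulmx1.
  exact: submx_trans (Range_power_chain stepN G0 i) (f_mono _ _ (ltnW lt_im)).
exact: submx_trans (Range_power_chain stepNV G0 i.+1) (f_mono _ _ lt_im).
Qed.

Lemma invmx_update A E : A \in unitmx -> (A - E) \in unitmx ->
  invmx (A - E) = invmx A + invmx A *m E *m invmx (A - E).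
Proof.
move=> uA uAE.
rewrite -[in LHS](mul1mx (invmx (A - E))) -(mulVmx uA).
rewrite -[in X in invmx A *m X](subrK E A) mulmxDr mulmxDl.
by rewrite -mulmxA mulmxV // mulmx1.
Qed.

Lemma EK_update_sub p q A (B : 'M[R]_(n, p)) (Ct : 'M[R]_(n, q)) X M m :
  A \in unitmx -> (A - X *m B *m B^T) \in unitmx -> (0 < M)%N ->
  (Range X <= EK M A Ct)%MS ->
  (EK m (A - X *m B *m B^T) (row_mx Ct (X *m B)) <= EK (m + M) A Ct)%MS.
Proof.
move=> uA uK M_gt0 XS.
pose f j := EK (j + M) A Ct.
have incr j : (f j <= f j.+1)%MS by exact: EK_monotone.
have Xf j : (Range X <= f j)%MS.
  by apply: submx_trans XS (EK_monotone _ _ _); rewrite leq_addl.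
have corr k (Z : 'M[R]_(k, n)) : (Z *m (X *m B *m B^T)^T <= Range X)%MS.
  by rewrite -mulmxA trmx_mul mulmxA submxMl.
apply: (EK_chain_sub (f := f)) => [//|j|j|].
- rewrite linearB mulmxDr addmx_sub ?EK_mulA // mulmxN eqmx_opp.
  exact: submx_trans (corr _ _) (Xf j.+1).
- rewrite invmx_update // linearD /= mulmxDr addmx_sub ?EK_mulinvA //.
  rewrite /= trmx_mul (trmx_mul (invmx A)) !mulmxA.
  apply: submx_trans (submxMr _ (corr _ _)) _.
  exact: submx_trans (submxMr _ (Xf j)) (EK_mulinvA _ _ uA).
- rewrite /Range tr_row_mx col_mx_sub; apply/andP; split.
    by have := EK_power_sub A Ct M_gt0; rewrite expr0 mul1mx.
  by rewrite trmx_mul; apply: submx_trans (submxMl _ _) (Xf 0%N).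
Qed.

Lemma Range_congr_sub r (W : 'M[R]_(n, r)) (Y : 'M[R]_r) :
  (Range (W *m Y *m W^T) <= Range W)%MS.
Proof. by rewrite /Range !trmx_mul trmxK mulmxA submxMl. Qed.

End ExtendedKrylov.

Theorem theorem1 (R : realFieldType) (n p q : nat)
  (A : 'M[R]_n) (B : 'M[R]_(n, p)) (C : 'M[R]_(q, n))
  (X : nat -> 'M[R]_n) (m : nat -> nat) (r : nat -> nat)
  (W : forall k, 'M[R]_(n, r k)) (Y : forall k, 'M[R]_(r k)) :
  A \in unitmx ->
  X 0%N = 0 ->
  (forall k, (A - X k *m B *m B^T) \in unitmx) ->
  (forall k, (1 <= m k)%N) ->
  (forall k, orthonormal_basis (W k)
               (EK (m k) (A - X k *m B *m B^T) (row_mx C^T (X k *m B)))) ->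
  (forall k, X k.+1 = W k *m Y k *m (W k)^T) ->
  forall k : nat, exists mbar : nat,
    (mbar <= \sum_(j < k.+1) m j + 2)%N /\
    (Range (X k.+1) <= EK mbar A C^T)%MS.
Proof.
move=> uA X0 uK _ basisW defX.
have inv k : (Range (X k) <= EK (\sum_(j < k) m j + 1) A C^T)%MS.
  elim: k => [|k IHk]; first by rewrite X0 /Range trmx0 sub0mx.
  have [_ /eqmxP rangeW] := basisW k.
  rewrite defX; apply: submx_trans (Range_congr_sub _ _) _; rewrite rangeW.
  rewrite big_ord_recr /= -addnA addnCA.
  by apply: EK_update_sub => //; rewrite addn1.
move=> k; exists (\sum_(j < k.+1) m j + 1)%N.
by rewrite leq_add2l inv.
Qed.
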